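(* Suppose the real random variable $X$ has a log-concave density $f$ (and $\mathbf P(X>0)>0$, $\mathbf P(X<0)>0$). Let $\zeta:=P-N+1$, where $P$ and $N$ are independent, $P$ has the law of $X$ conditioned on $\{X>0\}$ and $N$ has the law of $X$ conditioned on $\{X<0\}$. Then $\zeta$ takes values in $[1,\infty)$ and for all $\theta\ge0$, \[(X-\theta)\mid\{X>\theta\}\ \le_{lr}\ \zeta,\qquad -(X+\theta)\mid\{X<-\theta\}\ \le_{lr}\ \zeta.\]
   Context: A density $f$ is log-concave if $f(\theta x+(1-\theta)y)\ge f(x)^\theta f(y)^{1-\theta}$ for all $x,y\in\mathbb R$, $\theta\in[0,1]$. For real random variables $U,W$, $U\le_{lr}W$ (likelihood ratio order) means $\mathbf P(U\in A)\mathbf P(W\in B)\ge\mathbf P(U\in B)\mathbf P(W\in A)$ for all measurable $A,B\subset\mathbb R$ with $\sup A\le\inf B$; with densities this reads $f_U(u)f_W(w)\ge f_U(w)f_W(u)$ for all $u\le w$. *)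

From HB Require Import structures.
From mathcomp Require Import all_boot all_order all_algebra.
From mathcomp Require Import all_classical all_reals all_analysis.
Set Implicit Arguments. Unset Strict Implicit. Unset Printing Implicit Defensive.
Import Order.TTheory GRing.Theory Num.Theory.
Local Open Scope classical_set_scope.
Local Open Scope ring_scope.

Section Defs.
Variable R : realType.
Local Notation mu := (@lebesgue_measure R).

Definition is_density (f : R -> R) : Prop :=
  [/\ measurable_fun setT f, (forall x, 0 <= f x),
      mu.-integrable setT (EFin \o f) & Rintegral mu setT f = 1].

Definition log_concave (f : R -> R) : Prop :=
  forall x y t, 0 <= t <= 1 ->
    f x `^ t * f y `^ (1 - t) <= f (t * x + (1 - t) * y).

Definition dprob (f : R -> R) (D : set R) : R := Rintegral mu D f.

(* law of (X - th) | {X > th} :  A |-> P(X > th, X - th in A) / P(X > th) *)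
Definition law_right (f : R -> R) (th : R) (A : set R) : R :=
  dprob f [set x | th < x /\ A (x - th)] / dprob f [set x | th < x].

(* law of -(X + th) | {X < -th} *)
Definition law_left (f : R -> R) (th : R) (A : set R) : R :=
  dprob f [set x | x < - th /\ A (- (x + th))] / dprob f [set x | x < - th].

(* law of zeta := P - N + 1, P ~ X|{X>0}, N ~ X|{X<0}, P and N independent:
   A |-> (1/(P(X>0) P(X<0))) * int_{x>0} int_{y<0} f x f y 1_A(x - y + 1) dy dx *)
Definition law_zeta (f : R -> R) (A : set R) : R :=
  Rintegral mu [set x | 0 < x]
    (fun x => Rintegral mu [set y | y < 0]
       (fun y => f x * f y * \1_A (x - y + 1)))
  / (dprob f [set x | 0 < x] * dprob f [set y | y < 0]).

Definition lr_le (PU PW : set R -> R) : Prop :=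
  forall A B : set R, measurable A -> measurable B ->
    (ereal_sup (EFin @` A) <= ereal_inf (EFin @` B))%E ->
    PU B * PW A <= PU A * PW B.

End Defs.

From HB Require Import structures.
From mathcomp Require Import all_boot all_order all_algebra.
From mathcomp Require Import all_classical all_reals all_analysis.
From mathcomp Require Import measurable_realfun ring lra.
Set Implicit Arguments. Unset Strict Implicit. Unset Printing Implicit Defensive.
Import Order.TTheory GRing.Theory Num.Theory.
Local Open Scope classical_set_scope.
Local Open Scope ring_scope.

(* Write Z(A) for the integral of f(p) f(q) over {p > 0, q < 0, p - q + 1 in A}, which is
   the law of zeta up to normalisation, and D(A) := P(X > th, X - th in A).  For A below B,
   Tonelli reduces D(B) Z(A) <= D(A) Z(B) to the same inequality at each fixed q < 0, a
   comparison of two products of one-dimensional integrals.  The measure-preserving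
   substitution (x, p) |-> (p + th + 1 - q, x - th - 1 + q) turns it into a pointwise
   inequality, namely the log-concavity estimate f(x1) f(x2) <= f(y1) f(y2) for
   x1 <= y1, y2 and x1 + x2 = y1 + y2.  The left tail is symmetric, with p > 0 fixed. *)

Lemma log_concave_mul_le (R : realType) (f : R -> R) :
  (forall x, 0 <= f x) -> log_concave f ->
  forall x1 x2 y1 y2, x1 <= y1 -> x1 <= y2 -> x1 + x2 = y1 + y2 ->
  f x1 * f x2 <= f y1 * f y2.
Proof.
move=> f0 lc x1 x2 y1 y2 xy1 xy2 sum_eq.
have [eq_x|neq_x] := eqVneq x1 x2.
  have [-> ->] : y1 = x1 /\ y2 = x1 by split; lra.
  by rewrite eq_x.
have lt_x : x1 < x2 by rewrite lt_neqAle neq_x; lra.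
have -> : y2 = x1 + x2 - y1 by lra.
(* y1 and x1 + x2 - y1 are the convex combinations of x1, x2 with weights l and 1 - l. *)
set l := (x2 - y1) / (x2 - x1).
have l01 : 0 <= l <= 1.
  by apply/andP; split; [rewrite divr_ge0 //; lra | rewrite ler_pdivrMr ?mul1r; lra].
have l01' : 0 <= 1 - l <= 1 by move: l01 => /andP[? ?]; apply/andP; split; lra.
have lc_y1 := lc x1 x2 l l01.
have lc_y2 := lc x1 x2 (1 - l) l01'.
rewrite (_ : l * x1 + (1 - l) * x2 = y1) in lc_y1; last by rewrite /l; field; lra.
rewrite subKr (_ : (1 - l) * x1 + l * x2 = x1 + x2 - y1) in lc_y2; last by rewrite /l; field; lra.
have pow_split x : 0 <= x -> x = x `^ l * x `^ (1 - l).
  by move=> x0; rewrite -powRD ?subrKC ?powRr1 ?oner_eq0.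
rewrite [f x1](pow_split _ (f0 _)) [f x2](pow_split _ (f0 _)).
rewrite [f x2 `^ _ * _]mulrC mulrACA.
by apply: ler_pM lc_y1 lc_y2; rewrite mulr_ge0 ?powR_ge0.
Qed.

Section lebesgue_translation.
Variable R : realType.
Local Notation mu := (@lebesgue_measure R).

Lemma measurable_addr (a : R) : measurable_fun setT (fun x : R => x + a).
Proof. exact: measurable_funD. Qed.

Lemma lebesgue_measure_shift (a : R) (A : set R) : measurable A ->
  pushforward mu ((fun x => x + a) : _ -> measurableTypeR R) A = mu A.
Proof.
move=> mA; apply/esym/lebesgue_measure_unique => //=; first exact: measurable_addr.
move=> _ _ [[b c] _ <-]; rewrite /pushforward.
have -> : (fun x : R => x + a) @^-1` `]b, c]%classic = `]b - a, c - a]%classic.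
  by apply/seteqP; split => x /=; rewrite !in_itv /= ?lerBrDr ?ltrBlDr.
rewrite !lebesgue_measure_itv /= !lte_fin ltrBlDr subrK -EFinD.
by congr (if _ then _ else _); congr (_%:E); lra.
Qed.

Lemma ge0_integral_shift (a : R) (g : R -> \bar R) : measurable_fun setT g ->
  (forall x, 0 <= g x)%E -> (\int[mu]_x g (x + a)%R = \int[mu]_x g x)%E.
Proof.
move=> mg g0.
transitivity (\int[pushforward mu ((fun x => x + a)%R : _ -> measurableTypeR R)]_x g x)%E.
  by rewrite ge0_integral_pushforward //; exact: measurable_addr.
apply: eq_measure_integral; first exact: measurable_addr.
by move=> ? A mA _; exact: lebesgue_measure_shift.
Qed.

(* The change of variables (x, y) |-> (y + a, x - a) preserves Lebesgue measure on R^2. *)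
Lemma ge0_integral_mul_le_swap (a : R) (g1 h1 g2 h2 : R -> \bar R) :
  measurable_fun setT g1 -> measurable_fun setT h1 ->
  measurable_fun setT g2 -> measurable_fun setT h2 ->
  (forall x, 0 <= g1 x)%E -> (forall x, 0 <= h1 x)%E ->
  (forall x, 0 <= g2 x)%E -> (forall x, 0 <= h2 x)%E ->
  (forall x y, g1 x * h1 y <= g2 (y + a)%R * h2 (x - a)%R)%E ->
  (\int[mu]_x g1 x * \int[mu]_y h1 y <= \int[mu]_x g2 x * \int[mu]_y h2 y)%E.
Proof.
move=> mg1 mh1 mg2 mh2 g10 h10 g20 h20 le_gh.
have mg2a : measurable_fun setT (fun y : R => g2 (y + a)).
  exact: measurableT_comp mg2 (measurable_addr a).
have mh2a : measurable_fun setT (fun x : R => h2 (x - a)).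
  exact: measurableT_comp mh2 (measurable_addr (- a)).
rewrite -(ge0_integral_shift a mg2 g20) -(ge0_integral_shift (- a) mh2 h20).
have ih1 : (0 <= \int[mu]_y h1 y)%E by exact: integral_ge0.
have ig2a : (0 <= \int[mu]_y g2 (y + a)%R)%E by exact: integral_ge0.
rewrite -(ge0_integralZr mu measurableT mg1 (fun x _ => g10 x) ih1).
rewrite [X in (_ <= X)%E]muleC.
rewrite -(ge0_integralZr mu measurableT mh2a (fun x _ => h20 _) ig2a).
apply: ge0_le_integral => //.
- by move=> x _; rewrite mule_ge0.
- by apply: emeasurable_funM => //; exact: measurable_cst.
- by apply: emeasurable_funM => //; exact: measurable_cst.
move=> x _; rewrite -(ge0_integralZl mu measurableT mh1 (fun y _ => h10 y) (g10 x)).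
rewrite -(ge0_integralZl mu measurableT mg2a (fun y _ => g20 _) (h20 (x - a)%R)).
apply: ge0_le_integral => //.
- by move=> y _; rewrite mule_ge0.
- by apply: emeasurable_funM => //; exact: measurable_cst.
- by apply: emeasurable_funM => //; exact: measurable_cst.
by move=> y _; rewrite [X in (_ <= X)%E]muleC.
Qed.

End lebesgue_translation.

Section integral_measure.
Context d (T : measurableType d) (R : realType) (nu : {measure set T -> \bar R}).

Lemma ge0_le_integral_scale (c1 c2 : \bar R) (F1 F2 : T -> \bar R) :
  (0 <= c1)%E -> (0 <= c2)%E -> measurable_fun setT F1 -> measurable_fun setT F2 ->
  (forall y, 0 <= F1 y)%E -> (forall y, 0 <= F2 y)%E ->
  (forall y, c1 * F1 y <= c2 * F2 y)%E ->
  (c1 * \int[nu]_y F1 y <= c2 * \int[nu]_y F2 y)%E.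
Proof.
move=> c10 c20 mF1 mF2 F10 F20 le_F.
rewrite -(ge0_integralZl nu measurableT mF1 (fun y _ => F10 y) c10).
rewrite -(ge0_integralZl nu measurableT mF2 (fun y _ => F20 y) c20).
apply: ge0_le_integral => //.
- by move=> y _; rewrite mule_ge0.
- exact: measurable_funeM.
- exact: measurable_funeM.
Qed.

Lemma EFin_Rintegral_indic (h : T -> R) (D : set T) :
  measurable D -> (forall x, 0 <= h x) ->
  (\int[nu]_x (h x * \1_D x)%:E < +oo)%E ->
  (Rintegral nu D h)%:E = (\int[nu]_x (h x * \1_D x)%:E)%E.
Proof.
move=> mD h0 h_lty; rewrite /Rintegral.
have -> : (\int[nu]_(x in D) (h x)%:E = \int[nu]_x (h x * \1_D x)%:E)%E.
  rewrite integral_mkcond; apply: eq_integral => x _.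
  by rewrite /patch indicE; case: ifP => _; rewrite ?mulr1 ?mulr0.
rewrite fineK // ge0_fin_numE // integral_ge0 // => x _.
by rewrite lee_fin mulr_ge0.
Qed.

End integral_measure.

Lemma le_mul_of_EFin (R : realType) (a b c e : R) (a' b' c' e' : \bar R) :
  a%:E = a' -> b%:E = b' -> c%:E = c' -> e%:E = e' ->
  (a' * b' <= c' * e')%E -> a * b <= c * e.
Proof. by move=> <- <- <- <-; rewrite -lee_fin !EFinM. Qed.

Lemma le_of_ereal_sup_le_inf (R : realType) (A B : set R) z u :
  (ereal_sup (EFin @` A) <= ereal_inf (EFin @` B))%E -> A z -> B u -> z <= u.
Proof.
move=> AB Az Bu; rewrite -lee_fin.
have z_le_sup : (z%:E <= ereal_sup (EFin @` A))%E by apply: ereal_sup_ubound; exists z.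
have inf_le_u : (ereal_inf (EFin @` B) <= u%:E)%E by apply: ereal_inf_lbound; exists u.
exact: le_trans z_le_sup (le_trans AB inf_le_u).
Qed.

Lemma lr_le_div (R : realType) (M N : set R -> R) (c e : R) : 0 <= c -> 0 <= e ->
  (forall A B : set R, measurable A -> measurable B -> (forall z u, A z -> B u -> z <= u) ->
     M B * N A <= M A * N B) ->
  lr_le (fun A => M A / c) (fun A => N A / e).
Proof.
move=> c0 e0 le_MN A B mA mB AB.
rewrite mulrACA [X in _ <= X]mulrACA ler_wpM2r ?mulr_ge0 ?invr_ge0 //.
by apply: le_MN => // z u; exact: le_of_ereal_sup_le_inf.
Qed.

Lemma mul_indic_le (T : Type) (R : numDomainType) (D : set T) x (a b : R) :
  0 <= b -> (D x -> a <= b) -> a * \1_D x <= b.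
Proof.
rewrite indicE; have [/set_mem Dx|_] := boolP (x \in D) => b0 le_ab.
  by rewrite mulr1 le_ab.
by rewrite mulr0.
Qed.

Lemma indic1 (T : Type) (R : pzRingType) (D : set T) x : D x -> \1_D x = 1 :> R.
Proof. by move=> Dx; rewrite indicE mem_set. Qed.

Section log_concave_density.
Variables (R : realType) (f : R -> R).
Local Notation mu := (@lebesgue_measure R).

Lemma measurable_gtr (a : R) : measurable [set x : R | a < x].
Proof. by rewrite -set_itvoy; exact: measurable_itv. Qed.

Lemma measurable_ltr (a : R) : measurable [set x : R | x < a].
Proof. by rewrite -set_itvNyo; exact: measurable_itv. Qed.

Definition right_tail (th : R) (A : set R) : set R := [set x | th < x /\ A (x - th)].

Definition left_tail (th : R) (A : set R) : set R := [set x | x < - th /\ A (- (x + th))].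

Lemma measurable_right_tail th A : measurable A -> measurable (right_tail th A).
Proof.
move=> mA; apply: measurableI; first exact: measurable_gtr.
by rewrite -[X in measurable X]setTI; apply: (measurable_addr (- th)).
Qed.

Lemma measurable_left_tail th A : measurable A -> measurable (left_tail th A).
Proof.
move=> mA; apply: measurableI; first exact: measurable_ltr.
have mopp : measurable_fun setT (fun x : R => - (x + th)).
  exact: measurableT_comp (measurable_addr th).
by rewrite -[X in measurable X]setTI; apply: mopp.
Qed.

Definition zeta_inner (A : set R) (x : R) : R :=
  Rintegral mu [set y | y < 0] (fun y => f x * f y * \1_A (x - y + 1)).

Definition zeta_mass (A : set R) : R := Rintegral mu [set x | 0 < x] (zeta_inner A).

Definition zeta_kernel (A : set R) (p q : R) : R :=
  f p * f q * \1_A (p - q + 1) * \1_[set y | y < 0] q * \1_[set x | 0 < x] p.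

Hypotheses (mf : measurable_fun setT f) (f0 : forall x, 0 <= f x)
  (fi : mu.-integrable setT (EFin \o f)).

Lemma ge0_integral_lty_le_scale (h : R -> R) (c : R) : measurable_fun setT h ->
  (forall x, 0 <= h x) -> (forall x, h x <= c * f x) -> (\int[mu]_x (h x)%:E < +oo)%E.
Proof.
move=> mh h0 le_hf.
apply: le_lt_trans (integrable_lty measurableT (integrableZl measurableT c fi)).
apply: ge0_le_integral => //.
- by move=> x _; rewrite lee_fin.
- exact/measurable_EFinP.
- by apply: measurable_funeM; exact/measurable_EFinP.
- by move=> x _; rewrite /= -EFinM lee_fin.
Qed.

Lemma dprobE (D : set R) : measurable D ->
  (dprob f D)%:E = (\int[mu]_x (f x * \1_D x)%:E)%E.
Proof.
move=> mD; apply: EFin_Rintegral_indic => //.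
apply: (@ge0_integral_lty_le_scale _ 1).
- by apply: measurable_funM => //; exact: measurable_indic.
- by move=> x; rewrite mulr_ge0.
- by move=> x; rewrite mul1r ler_piMr.
Qed.

Lemma measurable_density_indic (D : set R) : measurable D ->
  measurable_fun setT (fun x => (f x * \1_D x)%:E).
Proof.
by move=> mD; apply/measurable_EFinP; apply: measurable_funM => //; exact: measurable_indic.
Qed.

Lemma measurable_zeta_kernel A : measurable A ->
  measurable_fun setT (fun z : R * R => (zeta_kernel A z.1 z.2)%:E).
Proof.
move=> mA; apply/measurable_EFinP.
have mf1 : measurable_fun setT (fun z : R * R => f z.1) by exact: measurableT_comp.
have mf2 : measurable_fun setT (fun z : R * R => f z.2) by exact: measurableT_comp.
have mA12 : measurable_fun setT (fun z : R * R => \1_A (z.1 - z.2 + 1) : R).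
  apply: measurableT_comp; first exact: measurable_indic.
  by apply: measurable_funD => //; exact: measurable_funB.
have mN2 : measurable_fun setT (fun z : R * R => \1_[set y : R | y < 0] z.2 : R).
  exact: measurableT_comp (measurable_indic (measurable_ltr 0)) measurable_snd.
have mP1 : measurable_fun setT (fun z : R * R => \1_[set x : R | 0 < x] z.1 : R).
  exact: measurableT_comp (measurable_indic (measurable_gtr 0)) measurable_fst.
by do !apply: measurable_funM.
Qed.

Lemma zeta_kernel_ge0 A p q : 0 <= zeta_kernel A p q.
Proof. by rewrite /zeta_kernel !mulr_ge0. Qed.

Lemma measurable_zeta_kernel1 A p : measurable A ->
  measurable_fun setT (fun q => (zeta_kernel A p q)%:E).
Proof. by move=> mA; exact: measurableT_comp (measurable_zeta_kernel mA) (pair1_measurable p). Qed.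

Lemma measurable_zeta_kernel2 A q : measurable A ->
  measurable_fun setT (fun p => (zeta_kernel A p q)%:E).
Proof. by move=> mA; exact: measurableT_comp (measurable_zeta_kernel mA) (pair2_measurable q). Qed.

Lemma zeta_inner_indicE A p : measurable A ->
  (zeta_inner A p * \1_[set x | 0 < x] p)%:E = (\int[mu]_q (zeta_kernel A p q)%:E)%E.
Proof.
move=> mA.
have mK : measurable_fun setT (fun q => f p * f q * \1_A (p - q + 1) * \1_[set y | y < 0] q).
  apply: measurable_funM; last exact: measurable_indic (measurable_ltr 0).
  apply: measurable_funM; first by apply: measurable_funM => //; exact: measurable_cst.
  apply: measurableT_comp; first exact: measurable_indic.
  by apply: measurable_funD => //; apply: measurable_funB => //; exact: measurable_cst.
rewrite EFinM EFin_Rintegral_indic //; first last.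
- apply: (@ge0_integral_lty_le_scale _ (f p)) => // [y|y]; first by rewrite !mulr_ge0.
  have fpy0 : 0 <= f p * f y by rewrite mulr_ge0.
  by do 2 apply: mul_indic_le => // _.
- by move=> y; rewrite !mulr_ge0.
- exact: measurable_ltr.
rewrite -ge0_integralZr //; first exact/measurable_EFinP.
by move=> y _; rewrite lee_fin !mulr_ge0.
Qed.

Lemma zeta_inner_indic_le A p : measurable A ->
  zeta_inner A p * \1_[set x | 0 < x] p <= Rintegral mu setT f * f p.
Proof.
move=> mA; rewrite -lee_fin zeta_inner_indicE // EFinM.
rewrite /Rintegral fineK ?(integrable_fin_num measurableT fi) // muleC.
rewrite -ge0_integralZl ?lee_fin //; [|exact/measurable_EFinP|by move=> y _; rewrite lee_fin].
apply: ge0_le_integral => //.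
- by move=> q _; rewrite lee_fin zeta_kernel_ge0.
- exact: measurable_zeta_kernel1.
- by apply: measurable_funeM; exact/measurable_EFinP.
move=> q _; rewrite -EFinM lee_fin.
have fpq0 : 0 <= f p * f q by rewrite mulr_ge0.
by do 3 apply: mul_indic_le => // _.
Qed.

Lemma measurable_zeta_inner_indic A : measurable A ->
  measurable_fun setT (fun p => zeta_inner A p * \1_[set x | 0 < x] p).
Proof.
move=> mA.
have -> : (fun p => zeta_inner A p * \1_[set x | 0 < x] p) =
    fine \o (fun p => \int[mu]_q (zeta_kernel A p q)%:E)%E.
  by apply/funext => p /=; rewrite -zeta_inner_indicE.
apply: measurableT_comp; first exact: fine_measurable.
apply: (measurable_fun_fubini_tonelli_F (m2 := mu) _ (measurable_zeta_kernel mA)).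
by move=> z; rewrite lee_fin zeta_kernel_ge0.
Qed.

Lemma zeta_massE A : measurable A ->
  (zeta_mass A)%:E = (\int[mu]_p \int[mu]_q (zeta_kernel A p q)%:E)%E.
Proof.
move=> mA.
have inner_ge0 p : 0 <= zeta_inner A p by apply: Rintegral_ge0 => y _; rewrite !mulr_ge0.
rewrite EFin_Rintegral_indic //; first last.
- apply: (@ge0_integral_lty_le_scale _ (Rintegral mu setT f)).
  + exact: measurable_zeta_inner_indic.
  + by move=> p; rewrite mulr_ge0.
  + by move=> p; exact: zeta_inner_indic_le.
- exact: measurable_gtr.
by apply: eq_integral => p _; rewrite zeta_inner_indicE.
Qed.

Hypothesis lc : log_concave f.

Lemma zeta_kernel_right_exchange th A B x p q : 0 <= th ->
  (forall z u, A z -> B u -> z <= u) ->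
  f x * \1_(right_tail th B) x * zeta_kernel A p q <=
  f (p + (th + 1 - q)) * \1_(right_tail th A) (p + (th + 1 - q))
    * zeta_kernel B (x - (th + 1 - q)) q.
Proof.
move=> th0 AB; set rhs := (X in _ <= X).
have rhs0 : 0 <= rhs by rewrite /rhs !mulr_ge0 ?zeta_kernel_ge0.
rewrite mulrAC; apply: mul_indic_le => // -[th_x Bx].
rewrite /zeta_kernel !mulrA.
apply: mul_indic_le => // /= p0; apply: mul_indic_le => // /= q0; apply: mul_indic_le => // Az.
have zu := AB _ _ Az Bx.
have RAp : right_tail th A (p + (th + 1 - q)).
  by split; [lra | rewrite (_ : _ - th = p - q + 1) //; ring].
have Bx' : B (x - (th + 1 - q) - q + 1) by rewrite (_ : _ - q + 1 = x - th) //; ring.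
rewrite /rhs /zeta_kernel !indic1 //=; last lra.
rewrite !mulr1 mulrA ler_wpM2r // mulrC.
by apply: log_concave_mul_le => //; lra.
Qed.

Lemma zeta_kernel_left_exchange th A B x p q : 0 <= th ->
  (forall z u, A z -> B u -> z <= u) ->
  f x * \1_(left_tail th B) x * zeta_kernel A p q <=
  f (q - (th + 1 + p)) * \1_(left_tail th A) (q - (th + 1 + p))
    * zeta_kernel B p (x + (th + 1 + p)).
Proof.
move=> th0 AB; set rhs := (X in _ <= X).
have rhs0 : 0 <= rhs by rewrite /rhs !mulr_ge0 ?zeta_kernel_ge0.
rewrite mulrAC; apply: mul_indic_le => // -[x_th Bx].
rewrite /zeta_kernel !mulrA.
apply: mul_indic_le => // /= p0; apply: mul_indic_le => // /= q0; apply: mul_indic_le => // Az.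
have zu := AB _ _ Az Bx.
have LAq : left_tail th A (q - (th + 1 + p)).
  by split; [lra | rewrite (_ : - _ = p - q + 1) //; ring].
have Bx' : B (p - (x + (th + 1 + p)) + 1) by rewrite (_ : _ + 1 = - (x + th)) //; ring.
rewrite /rhs /zeta_kernel !indic1 //=; last lra.
rewrite !mulr1 mulrAC [leRHS]mulrCA [leRHS]mulrC ler_wpM2r //.
by apply: log_concave_mul_le => //; lra.
Qed.

Lemma zeta_massE_swap A : measurable A ->
  (zeta_mass A)%:E = (\int[mu]_q \int[mu]_p (zeta_kernel A p q)%:E)%E.
Proof.
move=> mA; apply: etrans (zeta_massE mA) _.
apply: (fubini_tonelli (m1 := mu) (m2 := mu) _ (measurable_zeta_kernel mA)).
by move=> z; rewrite lee_fin zeta_kernel_ge0.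
Qed.

Lemma right_tail_zeta_le th (A B : set R) : 0 <= th -> measurable A -> measurable B ->
  (forall z u, A z -> B u -> z <= u) ->
  dprob f (right_tail th B) * zeta_mass A <= dprob f (right_tail th A) * zeta_mass B.
Proof.
move=> th0 mA mB AB.
have K0 C (z : R * R) : (0 <= (zeta_kernel C z.1 z.2)%:E)%E by rewrite lee_fin zeta_kernel_ge0.
apply: (le_mul_of_EFin (dprobE (measurable_right_tail th mB)) (zeta_massE_swap mA)
  (dprobE (measurable_right_tail th mA)) (zeta_massE_swap mB)).
apply: ge0_le_integral_scale;
  try by move=> *; apply: integral_ge0 => *; rewrite lee_fin ?mulr_ge0 ?zeta_kernel_ge0.
- exact: (measurable_fun_fubini_tonelli_G (m1 := mu) _ (measurable_zeta_kernel mA) (K0 A)).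
- exact: (measurable_fun_fubini_tonelli_G (m1 := mu) _ (measurable_zeta_kernel mB) (K0 B)).
move=> q; apply: (@ge0_integral_mul_le_swap _ (th + 1 - q)).
- exact: measurable_density_indic (measurable_right_tail th mB).
- exact: measurable_zeta_kernel2.
- exact: measurable_density_indic (measurable_right_tail th mA).
- exact: measurable_zeta_kernel2.
- by move=> x; rewrite lee_fin mulr_ge0.
- by move=> p; exact: (K0 _ (p, q)).
- by move=> x; rewrite lee_fin mulr_ge0.
- by move=> p; exact: (K0 _ (p, q)).
by move=> x p; rewrite -!EFinM lee_fin; exact: zeta_kernel_right_exchange.
Qed.

Lemma left_tail_zeta_le th (A B : set R) : 0 <= th -> measurable A -> measurable B ->
  (forall z u, A z -> B u -> z <= u) ->
  dprob f (left_tail th B) * zeta_mass A <= dprob f (left_tail th A) * zeta_mass B.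
Proof.
move=> th0 mA mB AB.
have K0 C (z : R * R) : (0 <= (zeta_kernel C z.1 z.2)%:E)%E by rewrite lee_fin zeta_kernel_ge0.
apply: (le_mul_of_EFin (dprobE (measurable_left_tail th mB)) (zeta_massE mA)
  (dprobE (measurable_left_tail th mA)) (zeta_massE mB)).
apply: ge0_le_integral_scale;
  try by move=> *; apply: integral_ge0 => *; rewrite lee_fin ?mulr_ge0 ?zeta_kernel_ge0.
- exact: (measurable_fun_fubini_tonelli_F (m2 := mu) _ (measurable_zeta_kernel mA) (K0 A)).
- exact: (measurable_fun_fubini_tonelli_F (m2 := mu) _ (measurable_zeta_kernel mB) (K0 B)).
move=> p; apply: (@ge0_integral_mul_le_swap _ (- (th + 1 + p))).
- exact: measurable_density_indic (measurable_left_tail th mB).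
- exact: measurable_zeta_kernel1.
- exact: measurable_density_indic (measurable_left_tail th mA).
- exact: measurable_zeta_kernel1.
- by move=> x; rewrite lee_fin mulr_ge0.
- by move=> q; exact: (K0 _ (p, q)).
- by move=> x; rewrite lee_fin mulr_ge0.
- by move=> q; exact: (K0 _ (p, q)).
by move=> x q; rewrite opprK -!EFinM lee_fin; exact: zeta_kernel_left_exchange.
Qed.

Lemma zeta_kernel_itv p q : zeta_kernel `[1, +oo[ p q =
  (f p * \1_[set x | 0 < x] p) * (f q * \1_[set y | y < 0] q).
Proof.
rewrite /zeta_kernel !indicE.
have [/set_mem /= p0|_] := boolP (p \in [set x : R | 0 < x]); last by rewrite !(mulr0, mul0r).
have [/set_mem /= q0|_] := boolP (q \in [set y : R | y < 0]); last by rewrite !(mulr0, mul0r).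
rewrite mem_set /=; last by rewrite in_itv /= andbT; lra.
by rewrite !mulr1.
Qed.

Lemma zeta_mass_itv :
  zeta_mass `[1, +oo[ = dprob f [set x | 0 < x] * dprob f [set y | y < 0].
Proof.
have fi0 C x : (0 <= (f x * \1_C x)%:E)%E by rewrite lee_fin mulr_ge0.
apply/EFin_inj; rewrite zeta_massE // EFinM (dprobE (measurable_gtr 0)) (dprobE (measurable_ltr 0)).
rewrite -ge0_integralZr ?integral_ge0 //; last exact: measurable_density_indic (measurable_gtr 0).
apply: eq_integral => p _; rewrite -ge0_integralZl //.
  by apply: eq_integral => q _; rewrite zeta_kernel_itv EFinM.
exact: measurable_density_indic (measurable_ltr 0).
Qed.

End log_concave_density.

Theorem lemma3p1 (R : realType) (f : R -> R) :
  is_density f -> log_concave f ->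
  0 < dprob f [set x | 0 < x] -> 0 < dprob f [set x | x < 0] ->
  law_zeta f `[1, +oo[ = 1 /\
  (forall th : R, 0 <= th ->
     (0 < dprob f [set x | th < x] -> lr_le (law_right f th) (law_zeta f)) /\
     (0 < dprob f [set x | x < - th] -> lr_le (law_left f th) (law_zeta f))).
Proof.
move=> [mf f0 fi _] lc posP posN.
have posPN : 0 < dprob f [set x | 0 < x] * dprob f [set x | x < 0] by rewrite mulr_gt0.
split; first by rewrite /law_zeta -/(zeta_mass f _) zeta_mass_itv // divff // gt_eqF.
move=> th th0; split => pos_th.
- apply: (@lr_le_div _ (fun A => dprob f (right_tail th A)) (zeta_mass f) _ _ (ltW pos_th)
    (ltW posPN)) => A B mA mB AB.
  exact: right_tail_zeta_le.
- apply: (@lr_le_div _ (fun A => dprob f (left_tail th A)) (zeta_mass f) _ _ (ltW pos_th)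
    (ltW posPN)) => A B mA mB AB.
  exact: left_tail_zeta_le.
Qed.
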